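(* Let $\Gamma=(V,E)$ be a directed graph and $A(\Gamma)$ its associated algebra. Let $e_1,e_2\in E$ be edges with a common tail and $f_1,f_2\in E$ edges with a common head such that $h(e_i)=t(f_i)$ for $i=1,2$. Then in $A(\Gamma)$, for $\{i,j\}=\{1,2\}$, $$e_i(f_i-f_j)=(f_i-f_j)f_j,\qquad e_i(e_i-e_j)=(e_i-e_j)f_j.$$
   Context: Each edge $e$ has tail $t(e)$ and head $h(e)$; a directed path is $e_1,\dots,e_k$ with $t(e_{i+1})=h(e_i)$. For a field $k$, $A(\Gamma)$ is the quotient of the free associative $k$-algebra on the set $E$ by the relations that for any two directed paths $(e_1,\dots,e_k)$ and $(e'_1,\dots,e'_l)$ with the same origin and the same terminus, $(t-e_1)\cdots(t-e_k)=(t-e'_1)\cdots(t-e'_l)$ coefficientwise in the central variable $t$. *)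

From HB Require Import structures.
From mathcomp Require Import all_boot all_order all_algebra.
Set Implicit Arguments. Unset Strict Implicit. Unset Printing Implicit Defensive.
Import GRing.Theory.
Local Open Scope ring_scope.

(* A directed path: a NONEMPTY sequence of edges e_1 ... e_k (k >= 1)
   with tl e_(i+1) = hd e_i. *)
Fixpoint chain {V E : Type} (tl hd : E -> V) (e : E) (p : seq E) : Prop :=
  match p with
  | [::] => True
  | e' :: p' => tl e' = hd e /\ chain tl hd e' p'
  end.

Definition dpath_from_to {V E : Type} (tl hd : E -> V) (p : seq E) (u v : V) : Prop :=
  match p with
  | [::] => False
  | e :: p' => [/\ chain tl hd e p', tl e = u & hd (last e p') = v]
  end.

(* x : E -> B (B a k-algebra) satisfies the defining relations of A(Gamma):
   for any two directed paths (e_1..e_k), (e'_1..e'_l) with the same origin and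
   terminus, (t - x e_1)...(t - x e_k) = (t - x e'_1)...(t - x e'_l)
   coefficientwise in a central variable t, i.e. as polynomials in {poly B}. *)
Definition A_relations {V E : Type} (tl hd : E -> V) (k : fieldType)
    (B : algType k) (x : E -> B) : Prop :=
  forall (p q : seq E) (u v : V),
    dpath_from_to tl hd p u v -> dpath_from_to tl hd q u v ->
    \prod_(e <- p) ('X - (x e)%:P) = \prod_(e <- q) ('X - (x e)%:P) :> {poly B}.

(* An identity P (an equation between noncommutative expressions in the
   generators) holds in A(Gamma) = k<E>/(relations) iff it holds for every
   k-algebra B and every family x : E -> B satisfying the relations
   (universal property of the quotient of the free algebra). *)
Definition holds_in_A {V E : Type} (tl hd : E -> V) (k : fieldType)
    (P : forall B : algType k, (E -> B) -> Prop) : Prop :=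
  forall (B : algType k) (x : E -> B), A_relations tl hd x -> P B x.

From HB Require Import structures.
From mathcomp Require Import all_boot all_order all_algebra.
Set Implicit Arguments. Unset Strict Implicit. Unset Printing Implicit Defensive.
Import GRing.Theory.
Local Open Scope ring_scope.

(* The paths (e1, f1) and (e2, f2) share origin and terminus, so the relations
   give (t - e1)(t - f1) = (t - e2)(t - f2); comparing coefficients yields
   e1 + f1 = e2 + f2 and e1 f1 = e2 f2, and the four identities follow from
   these two by rewriting f1 - f2 = e2 - e1. *)

Lemma mul_XsubC2 (R : nzRingType) (a b : R) :
  ('X - a%:P) * ('X - b%:P) = 'X^2 - (a + b)%:P * 'X + (a * b)%:P.
Proof.
rewrite mulrBl !mulrBr -expr2 -commr_polyX polyCD mulrDl polyCM.
by rewrite opprB opprD (addrC (- (a%:P * 'X))) !addrA addrAC.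
Qed.

Lemma coef_mul_XsubC2 (R : nzRingType) (a b : R) :
  (('X - a%:P) * ('X - b%:P))`_0 = a * b /\
  (('X - a%:P) * ('X - b%:P))`_1 = - (a + b).
Proof.
rewrite mul_XsubC2 !coefD !coefN !coefCM !coefXn !coefX !coefC /=.
by rewrite !mulr0 !mulr1 !subrr !add0r !addr0.
Qed.

Lemma eq_mul_XsubC2 (R : nzRingType) (a b c d : R) :
  ('X - a%:P) * ('X - b%:P) = ('X - c%:P) * ('X - d%:P) ->
  a + b = c + d /\ a * b = c * d.
Proof.
move=> eq_pq; have [ab0 ab1] := coef_mul_XsubC2 a b.
have [cd0 cd1] := coef_mul_XsubC2 c d.
by split; [apply: oppr_inj; rewrite -ab1 -cd1 | rewrite -ab0 -cd0]; rewrite eq_pq.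
Qed.

Lemma square_commutation (R : pzRingType) (a b c d : R) :
  a + b = c + d -> a * b = c * d ->
  a * (b - d) = (b - d) * d /\ a * (a - c) = (a - c) * d.
Proof.
move=> sum_eq prod_eq.
have bd : b - d = c - a by apply/eqP; rewrite subr_eq addrAC -sum_eq addrC addKr.
have comm_bd : a * (b - d) = (b - d) * d by rewrite mulrBr prod_eq bd mulrBl.
have ac : a - c = - (b - d) by rewrite bd opprB.
by rewrite ac mulrN mulNr comm_bd.
Qed.

Lemma A_relations_square (V E : Type) (tl hd : E -> V) (k : fieldType)
    (B : algType k) (x : E -> B) (e1 e2 f1 f2 : E) :
  tl e1 = tl e2 -> hd f1 = hd f2 -> hd e1 = tl f1 -> hd e2 = tl f2 ->
  A_relations tl hd x ->
  x e1 + x f1 = x e2 + x f2 /\ x e1 * x f1 = x e2 * x f2.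
Proof.
move=> tl_e hd_f e1f1 e2f2 relA; apply: eq_mul_XsubC2.
have := relA [:: e1; f1] [:: e2; f2] (tl e1) (hd f1).
by rewrite !big_cons big_nil !mulr1; apply; split.
Qed.

Theorem proposition3p3p1 (k : fieldType) (V E : Type) (tl hd : E -> V)
    (e1 e2 f1 f2 : E) :
  tl e1 = tl e2 -> hd f1 = hd f2 -> hd e1 = tl f1 -> hd e2 = tl f2 ->
  holds_in_A tl hd (k := k) (fun B x =>
    (* {i,j} = {1,2} *)
    [/\ x e1 * (x f1 - x f2) = (x f1 - x f2) * x f2,
        x e1 * (x e1 - x e2) = (x e1 - x e2) * x f2,
        x e2 * (x f2 - x f1) = (x f2 - x f1) * x f1 &
        x e2 * (x e2 - x e1) = (x e2 - x e1) * x f1]).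
Proof.
move=> tl_e hd_f e1f1 e2f2 B x relA.
have [sum_eq prod_eq] := A_relations_square tl_e hd_f e1f1 e2f2 relA.
have [id1 id2] := square_commutation sum_eq prod_eq.
by have [id3 id4] := square_commutation (esym sum_eq) (esym prod_eq).
Qed.
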